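(* Let $G=(V,E,w)$ be an undirected graph with edge weights $w:E\to\mathbb{R}^+$, let $s,t\in V$, and let $h:V\to\mathbb{R}$ be a consistent heuristic, i.e. $h(u)\le w(u,v)+h(v)$ for every edge $\{u,v\}\in E$ taken in either orientation. Run the bidirectional stepping search described in the context, using the following pruning rule, where $\mu$ is the current value of the global variable at the time of the check: - a forward copy $v^{+}$ is pruned if and only if $\delta[v^{+}]+h(v)\ge\mu/2$; - a backward copy $v^{-}$ is pruned if and only if $\delta[v^{-}]-h(v)\ge\mu/2$. Then, for every choice of thresholds in the rounds and every interleaving of the parallel atomic operations, if the algorithm terminates (i.e. the frontier becomes empty), the returned value $\mu$ equals the shortest-path distance $d(s,t)$ in $G$.
   Context: Bidirectional stepping search with a pruning rule. For every vertex $v\in V$ there are two copies: $v^{+}$ (search from $s$) and $v^{-}$ (search from $t$). Each copy has a tentative distance $\delta[v^{\pm}]$, initialized to $+\infty$. A global variable $\mu$ is initialized to $+\infty$. Initialization sets $\delta[s^{+}]=0$ and $\delta[t^{-}]=0$, and inserts $s^{+}$ and $t^{-}$ into a set $F$, the frontier. While $F\neq\emptyset$, a round is executed. A real threshold $\theta$ is chosen, and it may depend arbitrarily on the current state; for example, it may be compared against $\delta$ plus the heuristic. An arbitrary nonempty-or-empty subset of $F$ selected by this threshold is removed from $F$. Each removed $u^{\oplus}$ is processed in parallel as follows: - If $u^{\oplus}$ satisfies the pruning rule, nothing is done. - Otherwise, for every neighbor $v$ of $u$, the algorithm performs an atomic write-min $\delta[v^{\oplus}]\leftarrow\min(\delta[v^{\oplus}],\,\delta[u^{\oplus}]+w(u,v))$.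 - If this write-min strictly decreased $\delta[v^{\oplus}]$, the algorithm then atomically sets $\mu\leftarrow\min(\mu,\,\delta[v^{+}]+\delta[v^{-}])$. After that, if $v^{\oplus}$ does not satisfy the pruning rule, $v^{\oplus}$ is inserted into $F$ (if not already present). At termination the algorithm returns $\mu$. Tentative distances only decrease over time. $d(u,v)$ denotes the true shortest-path distance in $G$. *)

From HB Require Import structures.
From mathcomp Require Import all_boot all_order all_algebra.
From mathcomp Require Import boolp classical_sets reals constructive_ereal ereal.
Set Implicit Arguments. Unset Strict Implicit. Unset Printing Implicit Defensive.
Import Order.TTheory GRing.Theory Num.Theory.
Local Open Scope classical_set_scope.
Local Open Scope ring_scope.

(* Copies of a vertex: (v, true) is the forward copy v^+, (v, false) is the
   backward copy v^-. *)

Inductive task (V : Type) :=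
  | TExpand of V & bool        (* process a removed frontier element u^b      *)
  | TRelax  of V & V & bool    (* atomic write-min along edge u -> v, copy b  *)
  | TMeet   of V & bool        (* atomic mu <- min(mu, d[v+] + d[v-])         *)
  | TInsert of V & bool.       (* pruning check of v^b, then insertion into F *)

Record state (R : realType) (V : finType) := State {
  dl    : V -> bool -> \bar R;     (* tentative distances delta[v^b]  *)
  mu    : \bar R;
  front : {set V * bool};
  pend  : seq (task V)             (* in-flight parallel operations   *)
}.

Section Algo.
Variables (R : realType) (V : finType) (e : rel V) (w : V -> V -> R)
          (h : V -> R) (s t : V).

(* weight of the walk s = x, p_1, ..., p_k *)
Fixpoint pweight (x : V) (p : seq V) : R :=
  if p is y :: q then w x y + pweight y q else 0.

Definition dist (x y : V) : \bar R :=
  ereal_inf [set (pweight x p)%:E | p in [set p : seq V | path e x p /\ last x p = y]].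

Definition pruned (st : state R V) (v : V) (b : bool) : bool :=
  if b then (mu st * (2^-1)%:E <= dl st v true + (h v)%:E)%E
  else (mu st * (2^-1)%:E <= dl st v false - (h v)%:E)%E.

Definition upd (d : V -> bool -> \bar R) (v : V) (b : bool) (x : \bar R) :=
  fun y c => if (y == v) && (c == b) then x else d y c.

Definition init : state R V :=
  State (fun y c => if c then (if y == s then 0%E else +oo%E)
                         else (if y == t then 0%E else +oo%E))
        +oo%E [set (s, true); (t, false)] [::].

Inductive step : state R V -> state R V -> Prop :=
  | StRound st (S : {set V * bool}) :
      pend st = [::] -> front st != finset.set0 -> S \subset front st ->
      step st (State (dl st) (mu st) (front st :\: S)
                     [seq TExpand x.1 x.2 | x <- enum S])
  | StExpand st p1 p2 u b :
      pend st = p1 ++ TExpand u b :: p2 ->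
      step st (State (dl st) (mu st) (front st)
                 (p1 ++ (if pruned st u b then [::]
                         else [seq TRelax u v b | v <- enum (e u)]) ++ p2))
  | StRelaxDec st p1 p2 u v b :
      pend st = p1 ++ TRelax u v b :: p2 ->
      (dl st u b + (w u v)%:E < dl st v b)%E ->
      step st (State (upd (dl st) v b (dl st u b + (w u v)%:E)%E) (mu st)
                     (front st) (p1 ++ TMeet v b :: p2))
  | StRelaxNo st p1 p2 u v b :
      pend st = p1 ++ TRelax u v b :: p2 ->
      ~~ (dl st u b + (w u v)%:E < dl st v b)%E ->
      step st (State (dl st) (mu st) (front st) (p1 ++ p2))
  | StMeet st p1 p2 v b :
      pend st = p1 ++ TMeet v b :: p2 ->
      step st (State (dl st) (Order.min (mu st) (dl st v true + dl st v false)%E)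
                     (front st) (p1 ++ TInsert v b :: p2))
  | StInsert st p1 p2 v b :
      pend st = p1 ++ TInsert v b :: p2 ->
      step st (State (dl st) (mu st)
                     (if pruned st v b then front st else (v, b) |: front st)
                     (p1 ++ p2)).

Inductive reachable : state R V -> Prop :=
  | ReachInit : reachable init
  | ReachStep st st' : reachable st -> step st st' -> reachable st'.

End Algo.

(* Every reachable state satisfies an invariant: each copy v^b is either still
   to be processed (in the frontier, or the target of a pending expand, meet or
   insert task), pruned, or relaxed along all its edges up to pending relax
   tasks; mu <= delta[v+] + delta[v-] unless a meet for v is pending; and every
   finite tentative distance, hence mu, is the weight of an actual walk, so
   d(s,t) <= mu.  In a terminal state every copy is thus pruned or settled.
   Walk along an s-t path P: the forward copies stay settled, so
   delta[x+] <= w(P[s..x]), until some vertex x is pruned forward, giving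
   mu/2 <= delta[x+] + h(x).  Either the backward search reached x within
   w(P[x..t]), and then mu <= delta[x+] + delta[x-] <= w(P), or it pruned a
   later vertex y, giving mu/2 <= delta[y-] - h(y), which consistency of h
   moves back to mu/2 <= w(P[x..t]) - h(x); the two halves add up to
   mu <= w(P). *)
From HB Require Import structures.
From mathcomp Require Import all_boot all_order all_algebra.
From mathcomp Require Import reals constructive_ereal ereal.
From mathcomp Require Import lra.
Set Implicit Arguments. Unset Strict Implicit. Unset Printing Implicit Defensive.
Import Order.TTheory GRing.Theory Num.Theory.
Local Open Scope ring_scope.

Section TaskEqType.
Variable V : eqType.

Definition task_code (k : task V) : nat * (V * V * bool) :=
  match k with
  | TExpand u b => (0, (u, u, b))
  | TRelax u v b => (1, (u, v, b))
  | TMeet u b => (2, (u, u, b))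
  | TInsert u b => (3, (u, u, b))
  end%N.

Definition task_decode (c : nat * (V * V * bool)) : option (task V) :=
  let: (n, (u, v, b)) := c in
  match n with
  | 0 => Some (TExpand u b)
  | 1 => Some (TRelax u v b)
  | 2 => Some (TMeet u b)
  | 3 => Some (TInsert u b)
  | _ => None
  end%N.

Lemma task_codeK : pcancel task_code task_decode. Proof. by case. Qed.

HB.instance Definition _ := Equality.copy (task V) (pcan_type task_codeK).
End TaskEqType.

Lemma has_splice (T : Type) (a : pred T) (p1 p2 l : seq T) k :
  has a (p1 ++ k :: p2) -> ~~ a k -> has a (p1 ++ l ++ p2).
Proof. by rewrite !has_cat /= => /or3P[-> | -> | ->]; rewrite ?orbT. Qed.

Lemma mem_splice (T : eqType) (p1 p2 l : seq T) k x :
  x \in p1 ++ k :: p2 -> x != k -> x \in p1 ++ l ++ p2.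
Proof.
move=> x_in x_ne; rewrite -has_pred1; apply: (@has_splice _ _ p1 p2 l k).
  by rewrite has_pred1.
by rewrite /= eq_sym.
Qed.

Lemma mem_splice_sub (T : eqType) (p1 p2 l : seq T) k x :
  x \in p1 ++ l ++ p2 -> x \in l \/ x \in p1 ++ k :: p2.
Proof. by rewrite !mem_cat inE => /or3P[-> | -> | ->]; rewrite ?orbT; [right | left | right]. Qed.

Section Update.
Variables (R : realType) (V : finType) (d : V -> bool -> \bar R).

Lemma upd_eq v b x : upd d v b x v b = x.
Proof. by rewrite /upd !eqxx. Qed.

Lemma upd_neq v b x y c : (y, c) != (v, b) -> upd d v b x y c = d y c.
Proof. by rewrite /upd xpair_eqE => /negbTE->. Qed.

Lemma upd_le v b x : (x < d v b)%E -> forall y c, (upd d v b x y c <= d y c)%E.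
Proof. by move=> /ltW ? y c; rewrite /upd; case: ifP => // /andP[/eqP-> /eqP->]. Qed.
End Update.

Lemma halves_le_add (R : realType) (m : \bar R) (a b : R) :
  (m * (2^-1)%:E <= a%:E)%E -> (m * (2^-1)%:E <= b%:E)%E -> (m <= (a + b)%:E)%E.
Proof.
case: m => [r||] //=; last by rewrite leNye.
- by rewrite -EFinM !lee_fin => ? ?; lra.
- by rewrite mulyr gtr0_sg ?invr_gt0 // mul1e.
Qed.

Section Correctness.
Variables (R : realType) (V : finType) (e : rel V) (w : V -> V -> R) (h : V -> R) (s t : V).
Hypothesis e_sym : symmetric e.
Hypothesis w_sym : forall u v, e u v -> w u v = w v u.
Hypothesis h_consistent : forall u v, e u v -> h u <= w u v + h v.
Local Open Scope ereal_scope.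

Definition settled (st : state R V) u b :=
  forall v, e u v -> dl st v b <= dl st u b + (w u v)%:E.

Section Terminal.
Variable st : state R V.
Hypothesis pruned_or_settled : forall u b, pruned h st u b \/ settled st u b.
Hypothesis mu_le_meet : forall v, mu st <= dl st v true + dl st v false.
Hypothesis dl_source : dl st s true <= 0.
Hypothesis dl_target : dl st t false <= 0.

Lemma backward_bound q y : path e y q -> last y q = t ->
  dl st y false <= (pweight w y q)%:E \/ mu st * (2^-1)%:E <= (pweight w y q - h y)%:E.
Proof.
elim: q y => [|z q IH] y /=; first by move=> _ ->; left.
move=> /andP[eyz pz] /(IH z pz) [dz|pruned_z]; last first.
  by right; apply: le_trans pruned_z _; rewrite lee_fin; have := h_consistent eyz; lra.
have [pruned_z'|settled_z] := pruned_or_settled z false.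
- right; apply: le_trans pruned_z' _; apply: le_trans (leeD2r _ dz) _.
  by rewrite -EFinB lee_fin; have := h_consistent eyz; lra.
- left; have := settled_z y; rewrite -e_sym -(w_sym eyz) => /(_ eyz) dy.
  by apply: le_trans dy _; rewrite EFinD addeC; apply: leeD2r.
Qed.

Lemma forward_bound q y g : path e y q -> last y q = t -> dl st y true <= g%:E ->
  mu st <= (g + pweight w y q)%:E.
Proof.
elim: q y g => [|z q IH] y g /=.
  move=> _ -> dy; apply: le_trans (mu_le_meet t) _.
  by rewrite addr0 -(adde0 g%:E); apply: leeD.
move=> /andP[eyz pz] lz dy.
have [pruned_y|settled_y] := pruned_or_settled y true; last first.
  rewrite addrA; apply: IH pz lz _; apply: le_trans (settled_y z eyz) _.
  by rewrite EFinD; apply: leeD2r.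
have pruned_y' : mu st * (2^-1)%:E <= (g + h y)%:E.
  by apply: le_trans pruned_y _; rewrite EFinD; apply: leeD2r.
have /= := backward_bound (q := z :: q) (y := y); rewrite eyz pz.
case=> // [dy'|pruned_y''].
- by apply: le_trans (mu_le_meet y) _; rewrite EFinD; apply: leeD.
- by have := halves_le_add pruned_y' pruned_y''; congr (_ <= _%:E); rewrite /=; lra.
Qed.

Lemma mu_le_dist : mu st <= dist e w s t.
Proof.
apply: le_ereal_inf_tmp => _ [p [ps pt] <-].
by have := forward_bound ps pt dl_source; rewrite add0r.
Qed.
End Terminal.

Lemma pweight_cat x p q : pweight w x (p ++ q) = (pweight w x p + pweight w (last x p) q)%R.
Proof. by elim: p x => [|y p IH] x /=; rewrite ?add0r // IH addrA. Qed.

Definition walk_weight x y (d : \bar R) :=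
  exists p, [/\ path e x p, last x p = y & d = (pweight w x p)%:E].

Lemma walk_weight_cat x y z a c :
  walk_weight x y a%:E -> walk_weight y z c%:E -> walk_weight x z (a + c)%:E.
Proof.
move=> [p [px py [->]]] [q [qy qz [->]]]; exists (p ++ q).
by rewrite cat_path last_cat pweight_cat py px qy qz EFinD.
Qed.

Lemma walk_weight_edge x y : e x y -> walk_weight x y (w x y)%:E.
Proof. by move=> exy; exists [:: y]; rewrite /= exy addr0. Qed.

Lemma dist_le_walk_weight d : walk_weight s t d -> dist e w s t <= d.
Proof. by move=> [p [ps pt ->]]; apply: ereal_inf_lbound; exists p. Qed.

Definition task_copy (k : task V) : option (V * bool) :=
  match k with
  | TExpand u b | TMeet u b | TInsert u b => Some (u, b)
  | TRelax _ _ _ => None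
  end.

Definition queued (st : state R V) u b :=
  ((u, b) \in front st) || has (fun k => task_copy k == Some (u, b)) (pend st).

Definition relaxing (st : state R V) u b := forall v, e u v ->
  dl st v b <= dl st u b + (w u v)%:E \/ TRelax u v b \in pend st.

Record invariant (st : state R V) : Prop := Invariant {
  inv_copy : forall u b, [\/ queued st u b, pruned h st u b | relaxing st u b];
  inv_meet : forall v,
    mu st <= dl st v true + dl st v false \/ exists b, TMeet v b \in pend st;
  inv_forward : forall v, dl st v true = +oo \/ walk_weight s v (dl st v true);
  inv_backward : forall v, dl st v false = +oo \/ walk_weight v t (dl st v false);
  inv_dist : dist e w s t <= mu st;
  inv_source : dl st s true <= 0;
  inv_target : dl st t false <= 0;
  inv_relax_edge : forall u v b, TRelax u v b \in pend st -> e u v }.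

Lemma step_dl_le st st' : step e w h st st' -> forall v b, dl st' v b <= dl st v b.
Proof. by case=> st0 * //=; apply: upd_le. Qed.

Lemma pruned_mono st st' u b : mu st' <= mu st -> dl st' u b = dl st u b ->
  pruned h st u b -> pruned h st' u b.
Proof.
move=> le_mu eq_dl; have le_half : mu st' * (2^-1)%:E <= mu st * (2^-1)%:E.
  by apply: lee_wpmul2r; rewrite // lee_fin invr_ge0.
by case: b eq_dl => eq_dl; rewrite /pruned eq_dl => /(le_trans le_half).
Qed.

Lemma queued_task st k u b :
  k \in pend st -> task_copy k = Some (u, b) -> queued st u b.
Proof. by move=> k_in k_copy; apply/orP; right; apply/hasP; exists k; rewrite ?k_copy. Qed.

Lemma queued_splice st st' p1 p2 k l u b :
  pend st = p1 ++ k :: p2 -> pend st' = p1 ++ l ++ p2 -> {subset front st <= front st'} ->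
  task_copy k != Some (u, b) -> queued st u b -> queued st' u b.
Proof.
move=> Hp Hp' sub_front k_other; rewrite /queued Hp Hp'.
case/orP=> [/sub_front-> // | k_in]; apply/orP; right; exact: has_splice k_in k_other.
Qed.

Lemma copy_splice st st' p1 p2 k l u b :
  pend st = p1 ++ k :: p2 -> pend st' = p1 ++ l ++ p2 ->
  dl st' = dl st -> mu st' <= mu st -> (queued st u b -> queued st' u b) ->
  (forall v, k != TRelax u v b) ->
  [\/ queued st u b, pruned h st u b | relaxing st u b] ->
  [\/ queued st' u b, pruned h st' u b | relaxing st' u b].
Proof.
move=> Hp Hp' dl_eq mu_le queued_next k_relax [q | pr | rel].
- exact: Or31 (queued_next q).
- by apply: Or32; apply: pruned_mono pr; rewrite ?dl_eq.
- apply: Or33 => v euv; rewrite dl_eq Hp'.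
  case: (rel v euv) => [|H]; [by left | right].
  by rewrite Hp in H; apply: (mem_splice _ H); rewrite eq_sym.
Qed.

Lemma relaxing_relax st st' p1 p2 u0 v0 b0 l u b :
  pend st = p1 ++ TRelax u0 v0 b0 :: p2 -> pend st' = p1 ++ l ++ p2 ->
  (forall y, dl st' y b <= dl st y b) -> dl st' u b = dl st u b ->
  dl st' v0 b0 <= dl st u0 b0 + (w u0 v0)%:E -> relaxing st u b -> relaxing st' u b.
Proof.
move=> Hp Hp' dl_le dl_u dl_v0 rel v euv; rewrite dl_u.
case: (rel v euv) => [le_v | H]; first by left; apply: le_trans (dl_le v) le_v.
have [[-> -> ->] | ne] := eqVneq (TRelax u v b) (TRelax u0 v0 b0); first by left.
by right; rewrite Hp'; apply: mem_splice ne; rewrite -Hp.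
Qed.

Lemma step_relax_edge st st' : step e w h st st' -> invariant st ->
  forall u v b, TRelax u v b \in pend st' -> e u v.
Proof.
case=> st0 /=; first by move=> S _ _ _ _ u v b /mapP[].
- move=> p1 p2 u0 b0 Hp Hinv u v b /(mem_splice_sub (TExpand u0 b0)) [|H].
    by case: ifP => // _ /mapP[x]; rewrite mem_enum => xin [-> -> _].
  by apply: (inv_relax_edge Hinv); rewrite Hp; exact: H.
- move=> p1 p2 u0 v0 b0 Hp _ Hinv u v b /(mem_splice_sub (l := [:: _]) (TRelax u0 v0 b0)).
  by rewrite inE /= => -[// | H]; apply: (inv_relax_edge Hinv); rewrite Hp; exact: H.
- move=> p1 p2 u0 v0 b0 Hp _ Hinv u v b /(mem_splice_sub (l := [::]) (TRelax u0 v0 b0)).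
  by case=> // H; apply: (inv_relax_edge Hinv); rewrite Hp; exact: H.
- move=> p1 p2 v0 b0 Hp Hinv u v b /(mem_splice_sub (l := [:: _]) (TMeet v0 b0)).
  by rewrite inE /= => -[// | H]; apply: (inv_relax_edge Hinv); rewrite Hp; exact: H.
- move=> p1 p2 v0 b0 Hp Hinv u v b /(mem_splice_sub (l := [::]) (TInsert v0 b0)).
  by case=> // H; apply: (inv_relax_edge Hinv); rewrite Hp; exact: H.
Qed.

Lemma step_forward st st' : step e w h st st' -> invariant st ->
  forall v, dl st' v true = +oo \/ walk_weight s v (dl st' v true).
Proof.
case=> st0 /=; try by move=> *; apply: inv_forward.
move=> p1 p2 u v b Hp Hlt Hinv y.
have [[-> Eb] | neq] := eqVneq (y, true) (v, b); last by rewrite upd_neq //; apply: inv_forward.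
subst b.
rewrite upd_eq; right.
have [dl_u | [p [pp lp ->]]] := inv_forward Hinv u.
  by move: Hlt; rewrite dl_u addye // ltNge leey.
apply: (walk_weight_cat (y := u)); first by exists p.
by apply/walk_weight_edge/(inv_relax_edge Hinv (b := true)); rewrite Hp mem_cat mem_head orbT.
Qed.

Lemma step_backward st st' : step e w h st st' -> invariant st ->
  forall v, dl st' v false = +oo \/ walk_weight v t (dl st' v false).
Proof.
case=> st0 /=; try by move=> *; apply: inv_backward.
move=> p1 p2 u v b Hp Hlt Hinv y.
have [[-> Eb] | neq] := eqVneq (y, false) (v, b); last by rewrite upd_neq //; apply: inv_backward.
subst b.
rewrite upd_eq; right.
have [dl_u | [p [pp lp ->]]] := inv_backward Hinv u.
  by move: Hlt; rewrite dl_u addye // ltNge leey.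
have euv : e u v by apply: (inv_relax_edge Hinv (b := false)); rewrite Hp mem_cat mem_head orbT.
rewrite addeC (w_sym euv); apply: (walk_weight_cat (y := u)); last by exists p.
by apply: walk_weight_edge; rewrite e_sym.
Qed.

Lemma step_dist st st' : step e w h st st' -> invariant st -> dist e w s t <= mu st'.
Proof.
case=> st0 /=; try by move=> *; apply: inv_dist.
move=> p1 p2 v b _ Hinv; rewrite le_min inv_dist //=.
have [-> | [q [qv qt ->]]] := inv_backward Hinv v.
  by rewrite addey ?leey //; have [-> | [p [_ _ ->]]] := inv_forward Hinv v.
have [-> | [p [ps pv ->]]] := inv_forward Hinv v; first by rewrite addye ?leey.
by apply/dist_le_walk_weight/(walk_weight_cat (y := v)); [exists p | exists q].
Qed.

Lemma step_meet st st' : step e w h st st' -> invariant st -> forall v,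
  mu st' <= dl st' v true + dl st' v false \/ exists b, TMeet v b \in pend st'.
Proof.
case=> st0 /=.
- move=> S Hp _ _ Hinv v; have [|[b]] := inv_meet Hinv v; [by left | by rewrite Hp].
- move=> p1 p2 u b Hp Hinv v; have [|[c H]] := inv_meet Hinv v; [by left | right; exists c].
  by rewrite Hp in H; apply: (mem_splice _ H).
- move=> p1 p2 u v b Hp _ Hinv y.
  have [-> | yv] := eqVneq y v; first by right; exists b; rewrite mem_cat mem_head orbT.
  rewrite !upd_neq ?xpair_eqE ?(negbTE yv) //.
  have [|[c H]] := inv_meet Hinv y; [by left | right; exists c].
  by rewrite Hp in H; apply: (mem_splice [:: _] H).
- move=> p1 p2 u v b Hp _ Hinv y; have [|[c H]] := inv_meet Hinv y; [by left | right; exists c].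
  by rewrite Hp in H; apply: (mem_splice [::] H).
- move=> p1 p2 v b Hp Hinv y.
  have [-> | yv] := eqVneq y v; first by left; rewrite ge_min lexx orbT.
  have [le_mu|[c H]] := inv_meet Hinv y; first by left; rewrite ge_min le_mu.
  right; exists c; rewrite Hp in H; apply: (mem_splice [:: _] H).
  by apply: contraNneq yv => -[->].
- move=> p1 p2 v b Hp Hinv y; have [|[c H]] := inv_meet Hinv y; [by left | right; exists c].
  by rewrite Hp in H; apply: (mem_splice [::] H).
Qed.

Lemma copy_relax_decrease st p1 p2 u0 v0 b0 (x := dl st u0 b0 + (w u0 v0)%:E) :
  pend st = p1 ++ TRelax u0 v0 b0 :: p2 -> x < dl st v0 b0 -> invariant st ->
  forall u b, let st' := State (upd (dl st) v0 b0 x) (mu st) (front st) (p1 ++ TMeet v0 b0 :: p2) in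
  [\/ queued st' u b, pruned h st' u b | relaxing st' u b].
Proof.
move=> Hp lt_v0 Hinv u b st'.
have [[-> ->] | ne] := eqVneq (u, b) (v0, b0).
  by apply: Or31; apply: (queued_task (k := TMeet v0 b0)); rewrite // mem_cat mem_head orbT.
have [q | pr | rel] := inv_copy Hinv u b.
- by apply: Or31; apply: (queued_splice (l := [:: _]) Hp _ _ _ q).
- by apply: Or32; apply: pruned_mono pr => //=; rewrite upd_neq.
- apply: Or33; apply: (relaxing_relax (l := [:: _]) Hp _ _ _ _ rel) => //=.
  + by move=> y; apply: upd_le.
  + exact: upd_neq.
  + by rewrite upd_eq.
Qed.

Lemma step_copy st st' : step e w h st st' -> invariant st ->
  forall u b, [\/ queued st' u b, pruned h st' u b | relaxing st' u b].
Proof.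
case=> st0 /=.
- move=> S Hp _ _ Hinv u b; have [|pr|rel] := inv_copy Hinv u b; last 2 first.
  + exact: Or32 pr.
  + by apply: Or33 => v /rel [le_v|]; [left | rewrite Hp].
  case/orP=> [u_front | ]; last by rewrite Hp.
  apply: Or31; have [u_S|u_nS] := boolP ((u, b) \in S); last by rewrite /queued !inE u_nS u_front.
  apply: (queued_task (k := TExpand u b)) => //.
  by apply/mapP; exists (u, b); rewrite ?mem_enum.
- move=> p1 p2 u0 b0 Hp Hinv u b.
  have [[-> ->] | ne] := eqVneq (u, b) (u0, b0); last first.
    apply: (copy_splice Hp _ _ _ _ _ (inv_copy Hinv u b)) => //.
    by apply: (queued_splice Hp) => //; rewrite /= eq_sym.
  have [pr | _] := boolP (pruned h st0 u0 b0); first exact: Or32 pr.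
  apply: Or33 => v euv; right.
  by rewrite /= !mem_cat map_f ?orbT // mem_enum.
- move=> p1 p2 u0 v0 b0 Hp lt_v0 Hinv; exact: copy_relax_decrease Hp lt_v0 Hinv.
- move=> p1 p2 u0 v0 b0 Hp nlt_v0 Hinv u b.
  have [q | pr | rel] := inv_copy Hinv u b.
  + by apply: Or31; apply: (queued_splice (l := [::]) Hp _ _ _ q).
  + exact: Or32 pr.
  + by apply: Or33; apply: (relaxing_relax (l := [::]) Hp _ _ _ _ rel) => //; rewrite leNgt.
- move=> p1 p2 v0 b0 Hp Hinv u b.
  apply: (copy_splice (l := [:: _]) Hp _ _ _ _ _ (inv_copy Hinv u b)) => //=.
    by rewrite ge_min lexx.
  have [[-> ->] _ | ne] := eqVneq (u, b) (v0, b0).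
    by apply: (queued_task (k := TInsert v0 b0)); rewrite // mem_cat mem_head orbT.
  by apply: (queued_splice (l := [:: _]) Hp) => //; rewrite /= eq_sym.
- move=> p1 p2 v0 b0 Hp Hinv u b.
  have [[-> ->] | ne] := eqVneq (u, b) (v0, b0).
    have [pr | _] := boolP (pruned h st0 v0 b0); first exact: Or32 pr.
    by apply: Or31; rewrite /queued /= setU11.
  apply: (copy_splice (l := [::]) Hp _ _ _ _ _ (inv_copy Hinv u b)) => //.
  apply: (queued_splice (l := [::]) Hp) => //=; last by rewrite eq_sym.
  by case: ifP => _ x x_in //; rewrite !inE x_in orbT.
Qed.

Lemma step_invariant st st' : step e w h st st' -> invariant st -> invariant st'.
Proof.
move=> st_st' Hinv; split.
- exact: step_copy st_st' Hinv.
- exact: step_meet st_st' Hinv.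
- exact: step_forward st_st' Hinv.
- exact: step_backward st_st' Hinv.
- exact: step_dist st_st' Hinv.
- exact: le_trans (step_dl_le st_st' s true) (inv_source Hinv).
- exact: le_trans (step_dl_le st_st' t false) (inv_target Hinv).
- exact: step_relax_edge st_st' Hinv.
Qed.

Hypothesis s_neq_t : s != t.

Lemma init_invariant : invariant (init R s t).
Proof.
split=> //=.
- move=> u b; have [u_front | u_out] := boolP ((u, b) \in [set (s, true); (t, false)]).
    by apply: Or31; rewrite /queued u_front.
  apply: Or33 => v _; left; suff -> : dl (init R s t) u b = +oo by rewrite addye ?leey.
  move: u_out; rewrite !inE.
  by case: b; rewrite !xpair_eqE /= ?andbT ?andbF ?orbF ?orFb => /negbTE->.
- move=> v; left; case: eqP => [vs|_]; case: eqP => [vt|_]; rewrite ?add0e ?adde0 ?addye //.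
  by move: s_neq_t; rewrite -vs -vt eqxx.
- by move=> v; case: eqP => [->|_]; [right; exists [::] | left].
- by move=> v; case: eqP => [->|_]; [right; exists [::] | left].
- exact: leey.
- by rewrite eqxx.
- by rewrite eqxx.
Qed.

Lemma reachable_invariant st : reachable e w h s t st -> invariant st.
Proof.
by elim=> [|st0 st1 _ Hinv st_st']; [exact: init_invariant | exact: step_invariant st_st' Hinv].
Qed.

Lemma terminal_mu_le_dist st : invariant st -> front st = finset.set0 -> pend st = [::] ->
  mu st <= dist e w s t.
Proof.
move=> Hinv front0 pend0; apply: mu_le_dist (inv_source Hinv) (inv_target Hinv).
- move=> u b; case: (inv_copy Hinv u b) => [| pr | rel].
  + by rewrite /queued front0 pend0 inE.
  + by left.
  + by right=> v /rel; rewrite pend0 in_nil; case.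
- by move=> v; case: (inv_meet Hinv v) => // -[b]; rewrite pend0.
Qed.

End Correctness.

Theorem theorem3p3 (R : realType) (V : finType) (e : rel V)
    (w : V -> V -> R) (h : V -> R) (s t : V) :
  symmetric e ->
  (forall u v, e u v -> w u v = w v u) ->
  (forall u v, e u v -> 0 < w u v) ->
  (forall u v, e u v -> h u <= w u v + h v) ->
  s != t ->
  forall st : state R V, reachable e w h s t st ->
    front st = finset.set0 -> pend st = [::] ->
    mu st = dist e w s t.
Proof.
(* Positive weights are only needed for termination, which is assumed here. *)
move=> e_sym w_sym _ h_consistent s_neq_t st st_reach front0 pend0.
have Hinv := reachable_invariant e_sym w_sym s_neq_t st_reach.
apply/eqP; rewrite eq_le (inv_dist Hinv) andbT.
exact: (terminal_mu_le_dist e_sym w_sym h_consistent Hinv front0 pend0).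
Qed.
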